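(* Let $S$ and $T$ be disjoint nonempty finite sets, and suppose $L=M\mathbin{\Box} N=P\mathbin{\Box} Q$, where $M$ is a matroid on $S$, $N$ a matroid on $T$, $P$ a matroid on $T$ and $Q$ a matroid on $S$. Then $L$ is a uniform matroid.
   Context: For a matroid $M$ on $S$ write $\rho_M$ for rank, $\rho(M)=\rho_M(S)$, $\nu_M(A)=|A|-\rho_M(A)$, $\lambda_M(A)=\rho(M)-\rho_M(A)$. For matroids $M$ on $S$ and $N$ on $T$ with $S\cap T=\emptyset$, the free product $M\mathbin{\Box} N$ is the matroid on $S\cup T$ whose independent sets are those $A$ with $A\cap S$ independent in $M$ and $\lambda_M(A\cap S)\geq\nu_N(A\cap T)$. *)

From mathcomp Require Import all_boot.
Set Implicit Arguments. Unset Strict Implicit. Unset Printing Implicit Defensive.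

Section Matroid.
Variable E : finType.

Definition is_matroid (X : {set E}) (I : {set {set E}}) : Prop :=
  [/\ (forall A : {set E}, A \in I -> A \subset X),
      set0 \in I,
      (forall A B : {set E}, B \in I -> A \subset B -> A \in I) &
      (forall A B : {set E}, A \in I -> B \in I -> #|A| < #|B| ->
         exists2 x, x \in B :\: A & x |: A \in I)].

Definition mrank (I : {set {set E}}) (A : {set E}) : nat :=
  \max_(B in I | B \subset A) #|B|.

Definition nullity (I : {set {set E}}) (A : {set E}) : nat := #|A| - mrank I A.

Definition corank (X : {set E}) (I : {set {set E}}) (A : {set E}) : nat :=
  mrank I X - mrank I A.

Definition free_product (S : {set E}) (M : {set {set E}})
    (T : {set E}) (N : {set {set E}}) : {set {set E}} :=
  [set A : {set E} | [&& A \subset S :|: T, A :&: S \in M &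
                        nullity N (A :&: T) <= corank S M (A :&: S)]].

Definition is_uniform (X : {set E}) (I : {set {set E}}) : Prop :=
  exists r : nat, forall A : {set E}, (A \in I) = (A \subset X) && (#|A| <= r).

End Matroid.

(* When A :&: S is independent in M, the defining inequality of M [] N reads
   |A| <= r(M) + r_N(A :&: T).  Hence M [] N has rank r(M) + r(N), and every
   independent X of M extends, by points of T, to members of M [] N of every
   size up to that rank with S-part X.
   Let L = M [] N = P [] Q and show, by induction on |A|, that every A of size
   at most r(L) lies in L.  If A :&: S is in M and A :&: T in P, extend A :&: S
   in M [] N to a set of size |A|; it lies in P [] Q and has the S-part of A,
   which forces A into P [] Q.  If A :&: T is not in P, then A is contained in
   T (otherwise its proper subset A :&: T lies in L = P [] Q, hence in P), and
   A minus a point is in P; extending it in P [] Q by one point of the nonempty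
   S gives a member of L of size |A| whose T-part lies in A, which forces A
   into M [] N.  The case A :&: S not in M is symmetric. *)

From mathcomp Require Import all_boot zify.
Set Implicit Arguments. Unset Strict Implicit. Unset Printing Implicit Defensive.

Section Rank.
Variable E : finType.
Implicit Types (A B J X Y : {set E}) (I : {set {set E}}) (k : nat).

Lemma card_le_mrank I A B : B \in I -> B \subset A -> #|B| <= mrank I A.
Proof. by move=> BI BA; rewrite /mrank (leq_bigmax_cond B) // BI BA. Qed.

Lemma mrank_le_card I A : mrank I A <= #|A|.
Proof. by apply/bigmax_leqP => B /andP[_ /subset_leq_card]. Qed.

Lemma subset_leq_mrank I A B : A \subset B -> mrank I A <= mrank I B.
Proof.
move=> AB; apply/bigmax_leqP => C /andP[CI CA].
by apply: card_le_mrank CI (subset_trans CA AB).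
Qed.

Lemma mrank_indep I A : A \in I -> mrank I A = #|A|.
Proof. by move=> AI; apply/eqP; rewrite eqn_leq mrank_le_card card_le_mrank. Qed.

Lemma indep_card_le_mrank X I A :
  is_matroid X I -> A \in I -> #|A| <= mrank I X.
Proof. by case=> IX _ _ _ AI; apply: card_le_mrank AI (IX _ AI). Qed.

Lemma exists_basis I A :
  set0 \in I -> exists B, [/\ B \in I, B \subset A & #|B| = mrank I A].
Proof.
move=> I0; have : 0 < #|[pred B : {set E} | (B \in I) && (B \subset A)]|.
  by apply/card_gt0P; exists set0; rewrite inE I0 sub0set.
by case/(eq_bigmax_cond (fun B => #|B|)) => B /andP[BI BA] rkB; exists B.
Qed.

Lemma exists_subset_between J B k : J \subset B -> #|J| <= k <= #|B| ->
  exists X, [/\ J \subset X, X \subset B & #|X| = k].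
Proof.
move=> JB /andP[Jk kB].
have : 0 < #|[set Z : {set E} | Z \subset B :\: J & #|Z| == k - #|J|]|.
  by rewrite cards_draws bin_gt0 cardsD (setIidPr JB); lia.
case/card_gt0P => Z; rewrite inE subsetD => /andP[/andP[ZB dZJ] /eqP cardZ].
exists (Z :|: J); rewrite subsetUr subUset ZB JB.
by rewrite cardsU (disjoint_setI0 dZJ) cards0 cardZ; split=> //; lia.
Qed.

Lemma exists_subset_card_mrank I X k : is_matroid X I -> k <= #|X| ->
  exists Y, [/\ Y \subset X, #|Y| = k & minn k (mrank I X) <= mrank I Y].
Proof.
case=> _ I0 Idown _ kX; have [B [BI BX rkB]] := exists_basis X I0.
have [kB | Bk] := leqP k #|B|.
  have [|Y [_ YB cardY]] := exists_subset_between (sub0set B) (k := k).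
    by rewrite cards0 kB.
  exists Y; split=> //; first exact: subset_trans YB BX.
  by rewrite (mrank_indep (Idown _ _ BI YB)) cardY geq_minl.
have [|Y [BY YX cardY]] := exists_subset_between BX (k := k).
  by rewrite (ltnW Bk) kX.
exists Y; split=> //; rewrite -rkB geq_min (card_le_mrank BI BY).
by rewrite orbT.
Qed.

Lemma cardsI_disjoint_cover (S T A : {set E}) :
  [disjoint S & T] -> A \subset S :|: T -> #|A| = #|A :&: S| + #|A :&: T|.
Proof.
move=> dST AST; rewrite -cardsUI -setIUr (setIidPl AST).
by rewrite setIACA (disjoint_setI0 dST) setI0 cards0 addn0.
Qed.

End Rank.

Section FreeProduct.
Variables (E : finType) (S T : {set E}) (M N : {set {set E}}).
Hypotheses (dST : [disjoint S & T]) (HM : is_matroid S M) (HN : is_matroid T N).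
Implicit Types (A X : {set E}) (k n : nat).
Local Notation F := (free_product S M T N).

Lemma mem_free_product A : (A \in F) =
  [&& A \subset S :|: T, A :&: S \in M & #|A| <= mrank M S + mrank N (A :&: T)].
Proof.
rewrite inE; have [AST|] //= := boolP (A \subset S :|: T).
have [ASM|] //= := boolP (A :&: S \in M).
rewrite /nullity /corank (mrank_indep ASM) (cardsI_disjoint_cover dST AST).
have := indep_card_le_mrank HM ASM; have := mrank_le_card N (A :&: T).
by move=> *; apply/idP/idP; lia.
Qed.

Lemma free_product_card_le A : A \in F -> #|A| <= mrank M S + mrank N T.
Proof.
rewrite mem_free_product => /and3P[_ _ /leq_trans->] //.
by rewrite leq_add2l subset_leq_mrank ?subsetIr.
Qed.

Lemma mem_free_product_of_larger A A' :
    A \subset S :|: T -> A :&: S \in M ->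
    A' \in F -> A' :&: T \subset A :&: T -> #|A| <= #|A'| -> A \in F.
Proof.
move=> AST ASM; rewrite !mem_free_product AST ASM => /and3P[_ _ A'le] A'TAT A'A.
by rewrite (leq_trans A'A) // (leq_trans A'le) // leq_add2l subset_leq_mrank.
Qed.

Lemma free_product_extend X k : X \in M -> k <= #|T| ->
    #|X| + k <= mrank M S + mrank N T ->
  exists A, [/\ A \in F, A :&: S = X & #|A| = #|X| + k].
Proof.
move=> XM kT Xk; have [Y [YT cardY rkY]] := exists_subset_card_mrank HN kT.
have XS : X \subset S by case: HM => MS _ _ _; apply: MS.
have dXT : [disjoint X & T] := disjointWl XS dST.
have dYS : [disjoint Y & S] by rewrite disjoint_sym (disjointWr YT dST).
have [XYS XYT] : (X :|: Y) :&: S = X /\ (X :|: Y) :&: T = Y.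
  rewrite !setIUl (setIidPl XS) (setIidPl YT).
  by rewrite (disjoint_setI0 dXT) (disjoint_setI0 dYS) setU0 set0U.
have cardXY : #|X :|: Y| = #|X| + k.
  by rewrite cardsU (disjoint_setI0 (disjointWr YT dXT)) cards0 cardY subn0.
exists (X :|: Y); split=> //.
rewrite mem_free_product setUSS // XYS XYT XM cardXY.
have := indep_card_le_mrank HM XM; lia.
Qed.

Lemma free_product_rank_le n :
  (forall A, A \in F -> #|A| <= n) -> mrank M S + mrank N T <= n.
Proof.
move=> Fn; case: (HM) => _ M0 _ _; have [B [BM _ cardB]] := exists_basis S M0.
have [|A [AF _ cardA]] := free_product_extend BM (mrank_le_card N T).
  by rewrite cardB.
by rewrite -cardB -cardA Fn.
Qed.

End FreeProduct.

Section TwoDecompositions.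
Variables (E : finType) (S T : {set E}) (M N P Q : {set {set E}}).
Hypotheses (dST : [disjoint S & T])
  (HM : is_matroid S M) (HN : is_matroid T N)
  (HP : is_matroid T P) (HQ : is_matroid S Q)
  (eqL : free_product S M T N = free_product T P S Q).
Implicit Types A B : {set E}.
Local Notation L := (free_product S M T N).

Let dTS : [disjoint T & S]. Proof. by rewrite disjoint_sym. Qed.

Lemma free_product_ranks_eq : mrank M S + mrank N T = mrank P T + mrank Q S.
Proof.
apply/anti_leq/andP; split.
  apply: (free_product_rank_le dST HM HN) => A.
  rewrite eqL; exact: (free_product_card_le dTS HP).
apply: (free_product_rank_le dTS HP HQ) => A.
rewrite -eqL; exact: (free_product_card_le dST HM).
Qed.

Lemma mem_free_product_of_indep_parts A :
    A \subset S :|: T -> #|A| <= mrank M S + mrank N T ->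
  A :&: S \in M -> A :&: T \in P -> A \in L.
Proof.
move=> AST Ar ASM ATP; rewrite (cardsI_disjoint_cover dST AST) in Ar.
have [A' [A'L A'S cardA']] :=
  free_product_extend dST HM HN ASM (subset_leq_card (subsetIr A T)) Ar.
rewrite eqL in A'L *; apply: (mem_free_product_of_larger dTS HP _ _ A'L) => //.
- by rewrite setUC.
- by rewrite A'S.
- by rewrite cardA' -(cardsI_disjoint_cover dST AST).
Qed.

Lemma mem_free_product_of_dependent_part A : S != set0 ->
    A \subset S :|: T -> #|A| <= mrank P T + mrank Q S -> A :&: T \notin P ->
  (forall B, B \proper A -> B \in L) -> A \in L.
Proof.
move=> S0 AST Ar ATP IH.
have AT : A \subset T.
  apply: contraNT ATP => /properIl/IH; rewrite eqL (mem_free_product _ dTS HP).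
  by rewrite -setIA setIid => /and3P[].
have AS0 : A :&: S = set0 by apply/disjoint_setI0/(disjointWl AT).
rewrite (setIidPl AT) in ATP; case: (HP) => _ P0 _ _.
have [A0 | [a aA]] := set_0Vmem A; first by rewrite A0 P0 in ATP.
have XP : A :\ a \in P.
  have := IH _ (properD1 aA); rewrite eqL (mem_free_product _ dTS HP).
  by rewrite (setIidPl (subset_trans (subsetDl A _) AT)) => /and3P[].
have cardA : #|A| = #|A :\ a| + 1 by rewrite (cardsD1 a A) aA addnC.
have [||A' [A'L A'T cardA']] := free_product_extend dTS HP HQ XP (k := 1).
- by rewrite card_gt0.
- by rewrite -cardA.
rewrite -eqL in A'L; apply: (mem_free_product_of_larger dST HM _ _ A'L) => //.
- by rewrite AS0; case: HM.
- by rewrite A'T (setIidPl AT) subsetDl.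
- by rewrite cardA' -cardA.
Qed.

End TwoDecompositions.

Theorem corollary6p6 (E : finType) (S T : {set E})
    (M N P Q : {set {set E}}) :
  [disjoint S & T] -> S != set0 -> T != set0 ->
  is_matroid S M -> is_matroid T N -> is_matroid T P -> is_matroid S Q ->
  free_product S M T N = free_product T P S Q ->
  is_uniform (S :|: T) (free_product S M T N).
Proof.
move=> dST S0 T0 HM HN HP HQ eqL.
have dTS : [disjoint T & S] by rewrite disjoint_sym.
have rkL := free_product_ranks_eq dST HM HN HP HQ eqL.
exists (mrank M S + mrank N T) => A; apply/idP/andP => [AL | [AST Ar]].
  split; last exact: (free_product_card_le dST HM AL).
  by move: AL; rewrite (mem_free_product _ dST HM) => /and3P[].
have [n] := ubnP #|A|; elim: n A AST Ar => // n IHn A AST Ar /ltnSE An.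
have IH (B : {set E}) : B \proper A -> B \in free_product S M T N.
  move=> BA; have BA' := proper_sub BA.
  apply: IHn (leq_trans (proper_card BA) An).
  - exact: subset_trans BA' AST.
  - exact: leq_trans (subset_leq_card BA') Ar.
have [ASM | ASM] := boolP (A :&: S \in M); last first.
  rewrite eqL.
  apply: (mem_free_product_of_dependent_part dTS HP HM HN (esym eqL) T0) => //.
  - by rewrite setUC.
  - by move=> B /IH; rewrite eqL.
have [ATP | ATP] := boolP (A :&: T \in P).
  exact: (mem_free_product_of_indep_parts dST HM HN HP eqL AST Ar ASM ATP).
by apply: (mem_free_product_of_dependent_part dST HM HP HQ eqL S0); rewrite // -rkL.
Qed.
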